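(* Let $A$ be a finite abelian group of order $n$ which is not a $2$-group, and let $S$ be a random inverse-closed subset of $A$ chosen as in the model below, with $\frac{25(\log n)^2}{n}\le p\le \frac12$. Then the probability that there exist subgroups $H,K$ of $A$ with $\{0\}\ne H\le K\lneq A$ such that $S\setminus K$ is a union of cosets of $H$ is $O(\exp(-(\log n)^2))$ as $n\to\infty$.
   Context: Random model: given a finite abelian group $A$ (written additively) and $0<p<1$, a random subset $S\subseteq A\setminus\{0\}$ is formed as follows: each element $g\in A$ of order exactly $2$ is put into $S$ independently with probability $p$, and for each pair $\{x,-x\}$ with $x\ne -x$, both $x$ and $-x$ are put into $S$ with probability $p$ (and neither otherwise), all these choices being independent. Thus $S=-S$ and $0\notin S$. $\log$ denotes $\log_2$. *)

From HB Require Import structures.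
From mathcomp Require Import all_boot all_order all_fingroup all_solvable.
From Stdlib Require Import Reals.

Set Implicit Arguments.
Unset Strict Implicit.
Unset Printing Implicit Defensive.

Definition log2 (x : R) : R := (ln x / ln 2)%R.

Section RandomModel.
Local Open Scope group_scope.
Variable gT : finGroupType.

(* The "choice units" of the model: the sets {x, x^-1} for x in A \ {1}
   (singletons for elements of order 2, pairs otherwise). *)
Definition inv_pairs (A : {set gT}) : {set {set gT}} :=
  [set [set x; x^-1] | x in A :\ 1].

Definition sym_subset (A S : {set gT}) : bool :=
  (S \subset A :\ 1) && (S^-1 == S).

Definition weight (A S : {set gT}) (p : R) : R :=
  (p ^ #|[set o in inv_pairs A | o \subset S]|
   * (1 - p) ^ #|[set o in inv_pairs A | ~~ (o \subset S)]|)%R.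

Definition prob (A : {set gT}) (p : R) (E : {set gT} -> bool) : R :=
  \big[Rplus/0%R]_(S : {set gT} | sym_subset A S && E S) weight A S p.

(* The event: there are subgroups 1 <> H <= K < A with S \ K a union of
   cosets of H (i.e. closed under translation by H). *)
Definition bad_event (A : {set gT}) (S : {set gT}) : bool :=
  [exists H : {group gT}, exists K : {group gT},
     [&& H :!=: 1, H \subset K, K \proper A &
         [forall x in S :\: K, x *: (H : {set gT}) \subset S :\: K]]].

End RandomModel.

From mathcomp Require Import all_boot all_order all_fingroup all_solvable.
From Stdlib Require Import Reals Lra.
(* Re-importing ssrnat gives its notations ([^], [%N]) precedence over Reals'. *)
From mathcomp Require Import ssrnat zify Rstruct.

Set Implicit Arguments.
Unset Strict Implicit.
Unset Printing Implicit Defensive.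

(* Fix subgroups 1 < H <= K < A and h in H \ 1.  If S \ K is a union of
   H-cosets, it is invariant under multiplication by h, hence a union of classes
   y<h> U y^-1<h>; so S is determined by the inverse pairs inside K that it
   contains together with one inverse pair per class outside K.  As p <= 1 - p,
   the event then has probability at most (1 - p)^u, where u is the number of
   remaining pairs.  Each y outside K contributes 1/|{y, y^-1}| - 1/|class of y|
   to u, which is >= 1/6 when h has order >= 3 and >= 1/4 when h is an
   involution and y^2 <> h; since A is not a 2-group, y^2 = h has at most |A|/6
   solutions, and |A \ K| >= |A|/2, so u >= |A|/12.  A proper K is generated
   by fewer than log2 |A| elements, so a union bound over the at most
   |A|^(log2 |A|) choices of h and generators of K, together with
   p |A| >= 25 (log2 |A|)^2, gives the bound exp (- (log2 |A|)^2). *)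

Section RealSums.
Local Open Scope R_scope.
Variable I : finType.

Lemma sumR_le (P : pred I) (F G : I -> R) :
  (forall i, P i -> F i <= G i) ->
  \big[Rplus/0]_(i | P i) F i <= \big[Rplus/0]_(i | P i) G i.
Proof.
move=> FG; apply: (big_ind2 (fun x y => x <= y)) => //; first lra.
by move=> *; lra.
Qed.

Lemma sumR_ge0 (P : pred I) (F : I -> R) :
  (forall i, P i -> 0 <= F i) -> 0 <= \big[Rplus/0]_(i | P i) F i.
Proof.
move=> F0; apply: (big_ind (fun x => 0 <= x)) => //; first lra.
by move=> *; lra.
Qed.

Lemma sumR_le_sub (P Q : pred I) (F : I -> R) :
  (forall i, P i -> Q i) -> (forall i, Q i -> 0 <= F i) ->
  \big[Rplus/0]_(i | P i) F i <= \big[Rplus/0]_(i | Q i) F i.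
Proof.
move=> PQ F0; rewrite [X in _ <= X](bigID P) /=.
have -> : \big[Rplus/0]_(i | Q i && P i) F i = \big[Rplus/0]_(i | P i) F i.
  by apply: eq_bigl => i; case Pi: (P i); rewrite ?andbF ?PQ.
have : 0 <= \big[Rplus/0]_(i | Q i && ~~ P i) F i.
  by apply: sumR_ge0 => i /andP [Qi _]; apply: F0.
lra.
Qed.

Lemma sumR_const (B : {pred I}) (x : R) :
  \big[Rplus/0]_(i in B) x = INR #|B| * x.
Proof.
rewrite big_const; elim: #|B| => [|n IHn]; first by rewrite /=; ring.
by rewrite iterS IHn S_INR; ring.
Qed.

Lemma powersetD1 (V Y : {set I}) x :
  (Y \in powerset (V :\ x)) = (Y \in powerset V) && (x \notin Y).
Proof.
rewrite !powersetE; apply/idP/andP => [YV'|[YV xY]].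
  split; first exact: subset_trans YV' (subsetDl _ _).
  by apply/negP => /(subsetP YV'); rewrite in_setD1 eqxx.
apply/subsetP => y yY; rewrite in_setD1 (subsetP YV) // andbT.
by apply: contraNneq xY => <-.
Qed.

Lemma powersetU1 (V Y : {set I}) x : x \in V ->
  ((x |: Y \in powerset V) && ((x |: Y) :\ x == Y)) = (Y \in powerset (V :\ x)).
Proof.
move=> xV; rewrite powersetD1 !powersetE subUset sub1set xV /=.
apply/andP/andP => [[YV /eqP eY]|[YV xY]]; last by rewrite setU1K.
by split; rewrite // -eY !inE eqxx.
Qed.

Lemma sumR_powerset_binomial (a b : R) (V : {set I}) :
  \big[Rplus/0]_(Y in powerset V) (a ^ #|Y| * b ^ (#|V| - #|Y|)) = (a + b) ^ #|V|.
Proof.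
move cV: #|V| => n; elim: n V cV => [|n IHn] V cV.
  move/eqP: cV; rewrite cards_eq0 => /eqP ->.
  by rewrite powerset0 big_set1 cards0 /=; ring.
have [x xV] : exists x, x \in V by apply/set0Pn; rewrite -card_gt0 cV.
have cV' : #|V :\ x| = n by move: cV; rewrite (cardsD1 x V) xV add1n => -[].
have le_V' Y : Y \in powerset (V :\ x) -> (#|Y| <= n)%N.
  by rewrite powersetE -cV' => /subset_leq_card.
rewrite (bigID (fun Y : {set I} => x \in Y)) /=.
have -> : \big[Rplus/0]_(Y in powerset V | x \notin Y) (a ^ #|Y| * b ^ (n.+1 - #|Y|))
   = b * \big[Rplus/0]_(Y in powerset (V :\ x)) (a ^ #|Y| * b ^ (n - #|Y|)).
  rewrite big_distrr /=; apply: eq_big => Y; first by rewrite powersetD1.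
  by rewrite -powersetD1 => /le_V' leY; rewrite subSn //=; ring.
have -> : \big[Rplus/0]_(Y in powerset V | x \in Y) (a ^ #|Y| * b ^ (n.+1 - #|Y|))
   = a * \big[Rplus/0]_(Y in powerset (V :\ x)) (a ^ #|Y| * b ^ (n - #|Y|)).
  rewrite big_distrr /= (reindex_onto (fun Y => x |: Y) (fun Y => Y :\ x)) /=.
    apply: eq_big => Y; first by rewrite setU11 andbT powersetU1.
    rewrite setU11 andbT powersetU1 // => YV'.
    have xY : x \notin Y by move: YV'; rewrite powersetD1 => /andP [].
    by rewrite cardsU1 xY add1n subSS /=; ring.
  by move=> Y /andP [_ xY]; rewrite setD1K.
by rewrite IHn //=; ring.
Qed.

End RealSums.

Lemma card_classes_sum_inv (I : finType) (Y : {set I}) (c : I -> {set I}) :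
  (forall y, y \in Y -> y \in c y) ->
  (forall y z, y \in Y -> z \in c y -> z \in Y /\ c z = c y) ->
  (INR #|c @: Y| = \big[Rplus/0%R]_(y in Y) / INR #|c y|)%R.
Proof.
move=> cy cz; rewrite (partition_big_imset c) /= -[LHS]Rmult_1_r -sumR_const.
apply: eq_bigr => _ /imsetP [y0 y0Y ->].
rewrite (eq_bigl (mem (c y0))); last first.
  move=> i; apply/andP/idP => [[iY /eqP <-]|ic]; first exact: cy.
  by have [-> ->] := cz _ _ y0Y ic.
rewrite (eq_bigr (fun _ => / INR #|c y0|)%R); last first.
  by move=> i ic; have [_ ->] := cz _ _ y0Y ic.
rewrite sumR_const Rinv_r //; apply: not_0_INR.
by apply/eqP; rewrite -lt0n card_gt0; apply/set0Pn; exists y0; apply: cy.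
Qed.


Lemma pow_mul_pow_shift_le (p q : R) (j k u : nat) :
  (0 <= p <= q)%R -> (k <= j <= u)%N ->
  (p ^ j * q ^ (u - j) <= p ^ k * q ^ (u - k))%R.
Proof.
move=> [p0 pq] /andP [kj ju].
have -> : (u - k = (j - k) + (u - j))%N by lia.
rewrite -{1}(subnKC kj) !pow_add Rmult_assoc.
apply: Rmult_le_compat_l; first exact: pow_le.
apply: Rmult_le_compat_r; first by apply: pow_le; lra.
exact: pow_incr.
Qed.

Lemma Rinv_INR_le (a k : nat) : (0 < a)%N -> (a <= k)%N -> (/ INR k <= / INR a)%R.
Proof.
move=> a_gt0 ak; apply: Rinv_le_contravar; first by apply: lt_0_INR; apply/ltP.
by apply: le_INR; apply/leP.
Qed.

Lemma INR_expn (n T : nat) : INR (n ^ T) = (INR n ^ T)%R.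
Proof. by elim: T => [|T IHT] //=; rewrite expnS mult_INR IHT. Qed.

Lemma exp_le_compat (x y : R) : (x <= y)%R -> (exp x <= exp y)%R.
Proof.
by case/Rle_lt_or_eq_dec => [/exp_increasing/Rlt_le|->] //; apply: Rle_refl.
Qed.

Lemma ln_le_compat (x y : R) : (0 < x)%R -> (x <= y)%R -> (ln x <= ln y)%R.
Proof.
move=> x_gt0; case/Rle_lt_or_eq_dec => [/(ln_increasing _ _ x_gt0)/Rlt_le|->] //.
exact: Rle_refl.
Qed.

Lemma pow_one_minus_le_exp (p : R) (k : nat) :
  (0 <= p <= 1)%R -> ((1 - p) ^ k <= exp (- (p * INR k)))%R.
Proof.
move=> p01; apply: Rle_trans (_ : exp (- p) ^ k <= _)%R.
  by apply: pow_incr; have := exp_ineq1_le (- p); lra.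
elim: k => [|k IHk]; first by rewrite /= Rmult_0_r Ropp_0 exp_0; apply: Rle_refl.
rewrite S_INR /= Rmult_plus_distr_l Ropp_plus_distr Rmult_1_r exp_plus Rmult_comm.
by apply: Rmult_le_compat_r; [apply: Rlt_le; apply: exp_pos | exact: IHk].
Qed.

Section RandomModel.
Variables (gT : finGroupType) (A : {set gT}) (p : R).
Hypotheses (p_ge0 : (0 <= p)%R) (p_le_half : (p <= 1 / 2)%R).

Local Notation taken S := [set o in inv_pairs A | o \subset S].

Lemma weightE S :
  weight A S p = (p ^ #|taken S| * (1 - p) ^ (#|inv_pairs A| - #|taken S|))%R.
Proof.
rewrite /weight.
have -> : taken S = inv_pairs A :&: [set o : {set gT} | o \subset S].
  by apply/setP => o; rewrite !inE.
have -> : [set o in inv_pairs A | ~~ (o \subset S)]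
    = inv_pairs A :\: [set o : {set gT} | o \subset S].
  by apply/setP => o; rewrite !inE andbC.
by rewrite -(cardsID [set o : {set gT} | o \subset S] (inv_pairs A)) addKn.
Qed.

Lemma weight_ge0 S : (0 <= weight A S p)%R.
Proof. by apply: Rmult_le_pos; apply: pow_le; lra. Qed.

Lemma prob_le_sub (E E' : {set gT} -> bool) :
  (forall S, sym_subset A S -> E S -> E' S) -> (prob A p E <= prob A p E')%R.
Proof.
move=> EE'; apply: sumR_le_sub => [S /andP [sS ES]|S _]; last exact: weight_ge0.
by rewrite sS EE'.
Qed.

Lemma prob_pred0 : prob A p xpred0 = 0%R.
Proof. by rewrite /prob big_pred0 // => S; rewrite andbF. Qed.

Lemma prob_union_bound (I : finType) (J : {set I}) (E : {set gT} -> bool)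
    (F : I -> {set gT} -> bool) :
  (forall S, sym_subset A S -> E S -> exists2 i, i \in J & F i S) ->
  (prob A p E <= \big[Rplus/0%R]_(i in J) prob A p (F i))%R.
Proof.
move=> cover; rewrite /prob big_mkcondr.
under [X in (_ <= X)%R]eq_bigr do rewrite big_mkcondr.
rewrite (exchange_big (R := R)) /=; apply: sumR_le => S sS.
have term_ge0 i : (0 <= if F i S then weight A S p else 0)%R.
  by case: (F i S); [exact: weight_ge0 | exact: Rle_refl].
case ES: (E S); last exact: sumR_ge0.
have [i0 i0J Fi0] := cover S sS ES.
rewrite (bigD1 i0) //= Fi0.
have : (0 <= \big[Rplus/0%R]_(i in J | i != i0)
          (if F i S then weight A S p else 0))%R by exact: sumR_ge0.
lra.
Qed.

(* Since p <= 1 - p, an outcome weighs at most as much as the outcome that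
   agrees with it on D and takes no pair outside D; injectivity then bounds the
   sum by a binomial sum over the subsets of D. *)
Lemma prob_le_injective (E : {set gT} -> bool) (D : {set {set gT}}) :
  {in [pred S | sym_subset A S && E S] &,
    injective (fun S : {set gT} => taken S :&: D)} ->
  (prob A p E <= (1 - p) ^ #|inv_pairs A :\: D|)%R.
Proof.
move=> inj; set q := (1 - p)%R; set V := inv_pairs A :&: D.
pose g (Y : {set {set gT}}) := (p ^ #|Y| * q ^ (#|inv_pairs A| - #|Y|))%R.
have pq : (0 <= p <= q)%R by rewrite /q; lra.
have g_ge0 Y : (0 <= g Y)%R by apply: Rmult_le_pos; apply: pow_le; lra.
have taken_sub S : taken S \subset inv_pairs A.
  by apply/subsetP => o; rewrite inE => /andP [].
apply: Rle_trans (_ : \big[Rplus/0%R]_(S | sym_subset A S && E S)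
                        g (taken S :&: D) <= _)%R.
  apply: sumR_le => S _; rewrite weightE; apply: pow_mul_pow_shift_le => //.
  by rewrite !subset_leq_card ?subsetIl.
rewrite (eq_bigl (mem [set S : {set gT} | sym_subset A S && E S])); last first.
  by move=> S; rewrite !inE.
rewrite -(big_imset g) /=; last by move=> S S'; rewrite !inE; exact: inj.
apply: Rle_trans (_ : \big[Rplus/0%R]_(Y in powerset V) g Y <= _)%R.
  apply: sumR_le_sub => // Y /imsetP [S _ ->].
  by rewrite powersetE setSI.
have gV Y : Y \in powerset V ->
    g Y = (q ^ (#|inv_pairs A| - #|V|) * (p ^ #|Y| * q ^ (#|V| - #|Y|)))%R.
  rewrite powersetE => /subset_leq_card YV.
  have VU : (#|V| <= #|inv_pairs A|)%N by rewrite subset_leq_card ?subsetIl.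
  rewrite /g [RHS]Rmult_comm Rmult_assoc -pow_add; congr (_ * q ^ _)%R; lia.
rewrite (eq_bigr _ gV) -big_distrr /= sumR_powerset_binomial.
by rewrite /q Rplus_minus pow1 Rmult_1_r cardsD; apply: Rle_refl.
Qed.

End RandomModel.

Local Open Scope group_scope.

Lemma proper_card_double (gT : finGroupType) (K A : {group gT}) :
  K \proper A -> (2 * #|K| <= #|A|)%N.
Proof.
case/andP => KA notAK; rewrite -(Lagrange KA) mulnC leq_mul2l.
by rewrite indexg_gt1 notAK orbT.
Qed.

Section SmallGeneratingSets.
Variable gT : finGroupType.

Lemma gen_extend_small (K M : {group gT}) : M \subset K ->
  exists s : seq gT, <<M :|: [set:: s]>> = K /\ 2 ^ size s * #|M| <= #|K|.
Proof.
move: {2}(#|K| - #|M|).+1 (ltnSn (#|K| - #|M|)) => n.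
elim: n M => // n IHn M lt_n MK.
have [MeqK|/properP [_ [x xK xM]]] := eqVproper MK.
  by exists [::]; rewrite set_nil setU0 MeqK genGid mul1n.
set M' := <<M :|: [set x]>>%G.
have M'K : M' \subset K by rewrite gen_subG subUset sub1set xK MK.
have MM' : M \proper M'.
  apply/properP; split; first exact: subset_trans (subsetUl _ _) (subset_gen _).
  by exists x; rewrite // mem_gen // !inE eqxx orbT.
have M'_ge := proper_card_double MM'.
have [|s [genK cardK]] := IHn M' _ M'K.
  by have := subset_leq_card M'K; have := cardG_gt0 M; lia.
exists (x :: s); split.
  have := joing_idl (M :|: [set x]) [set:: s]; rewrite !joingE => eqM'.
  by rewrite set_cons setUA -eqM'.
rewrite [size _]/= expnS -mulnA; apply: leq_trans cardK.
by rewrite mulnCA leq_mul2l M'_ge orbT.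
Qed.

Lemma small_generating_seq (K : {group gT}) :
  exists s : seq gT, <<[set:: s]>> = K /\ 2 ^ size s <= #|K|.
Proof.
have [s [genK cardK]] := gen_extend_small (sub1G K).
exists s; split; last by rewrite cards1 muln1 in cardK.
apply/eqP; rewrite -genK eqEsubset genS ?subsetUr //.
by rewrite gen_subG subUset sub1G subset_gen.
Qed.

End SmallGeneratingSets.

Section SquareRootsOfInvolution.
Variables (gT : finGroupType) (A : {group gT}).
Hypotheses (abA : abelian A) (notA2 : ~~ pgroup 2 A).

Lemma card_Ldiv4_le : (3 * #|'Ldiv_4(A)| <= #|A|)%N.
Proof.
pose W := Group (group_Ldiv 4 abA).
have W2 : pgroup 2 W.
  by rewrite -pnat_exponent (@pnat_dvd _ 4) // -sub_LdivT subsetIr.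
have WA : W \subset A by exact: subsetIl.
have index_ge3 : (3 <= #|A : W|)%N.
  rewrite leqNgt; apply: contra notA2 => index_le2.
  rewrite /pgroup -(Lagrange WA) pnatM; apply/andP; split=> //.
  by case: #|A : W| (indexg_gt0 A W) index_le2 => [|[|[]]].
by rewrite -(Lagrange WA) mulnC; exact: leq_mul.
Qed.

Lemma card_sqrt_involution_le (h : gT) :
  h != 1 -> h ^+ 2 = 1 -> (6 * #|[set y in A | y ^+ 2 == h]| <= #|A|)%N.
Proof.
move=> h1 h2; set Z := [set y in A | y ^+ 2 == h].
suff : (2 * #|Z| <= #|'Ldiv_4(A)|)%N by have := card_Ldiv4_le; lia.
have [->|[y0 y0Z]] := set_0Vmem Z; first by rewrite cards0.
have /setIdP [y0A /eqP y0h] := y0Z.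
have Z_L2 : (#|Z| <= #|'Ldiv_2(A)|)%N.
  rewrite -(card_imset _ (mulIg y0^-1)); apply/subset_leq_card/subsetP.
  move=> _ /imsetP [y /setIdP [yA /eqP yh] ->]; apply/LdivP.
  have cy : commute y y0^-1 by apply: (centsP abA); rewrite ?groupV.
  by rewrite groupM ?groupV // expgMn // expgVn yh y0h mulgV.
have ZL2_L4 : Z :|: 'Ldiv_2(A) \subset 'Ldiv_4(A).
  apply/subsetP => y /setUP [/setIdP [yA /eqP yh]|/LdivP [yA y2]]; apply/LdivP.
    by rewrite -[4%N]/(muln 2 2) expgM yh.
  by rewrite -[4%N]/(muln 2 2) expgM y2 expg1n.
have Z_L2_disj : Z :&: 'Ldiv_2(A) = set0.
  apply/setP => y; rewrite !inE.
  apply/negP => /andP [/andP [_ /eqP yh] /andP [_ /eqP y2]].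
  by rewrite -yh y2 eqxx in h1.
have := subset_leq_card ZL2_L4; rewrite cardsU Z_L2_disj cards0 subn0; lia.
Qed.

End SquareRootsOfInvolution.

Definition stable_outside (gT : finGroupType) (K : {set gT}) (h : gT)
    (S : {set gT}) : bool :=
  [forall x in S :\: K, x * h \in S].

Definition inv_pair {gT : finGroupType} (y : gT) : {set gT} := [set y; y^-1].

Lemma inv_pairsE (gT : finGroupType) (A : {set gT}) :
  inv_pairs A = inv_pair @: (A :\ 1).
Proof. by []. Qed.

Lemma card_inv_pair (gT : finGroupType) (y : gT) : (0 < #|inv_pair y| <= 2)%N.
Proof. by rewrite cards2; case: (y != y^-1). Qed.

Section SymmetricSubsets.
Variables (gT : finGroupType) (A S : {set gT}).
Hypothesis symS : sym_subset A S.

Lemma sym_subsetV x : (x^-1 \in S) = (x \in S).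
Proof. by case/andP: symS => _ /eqP {2}<-; rewrite mem_invg. Qed.

Lemma sym_subset_mem x : x \in S -> x \in A :\ 1.
Proof. by case/andP: symS => /subsetP sS _ /sS. Qed.

Lemma sym_subset_pair x : (inv_pair x \subset S) = (x \in S).
Proof.
apply/subsetP/idP => [-> //|xS z]; first by rewrite !inE eqxx.
by rewrite !inE => /orP [] /eqP ->; rewrite ?sym_subsetV.
Qed.

End SymmetricSubsets.

Definition pick_rep (gT : finGroupType) (B : {set gT}) : gT := odflt 1 [pick x in B].

Section StableOutside.
Variables (gT : finGroupType) (A K : {group gT}) (h : gT).
Hypotheses (abA : abelian A) (KA : K \proper A) (hK : h \in K).

Local Notation H := <[h]>.
Local Notation Y := (A :\: K).

Definition pair_class (y : gT) : {set gT} := y *: (H : {set gT}) :|: y^-1 *: H.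

Definition determining_pairs : {set {set gT}} :=
  inv_pair @: (K :\ 1) :|: [set inv_pair (pick_rep (pair_class y)) | y in Y].

Let KsubA : K \subset A := proper_sub KA.
Let hA : h \in A := subsetP KsubA h hK.

Lemma outside_mulX y i : y \in Y -> y * h ^+ i \in Y.
Proof.
by rewrite !inE => /andP [yK yA]; rewrite groupMr ?groupX // yK groupM ?groupX.
Qed.

Lemma outsideV y : y \in Y -> y^-1 \in Y.
Proof. by rewrite !inE !groupV. Qed.

Lemma stable_outside_mulX S y i :
  stable_outside K h S -> y \in Y -> (y * h ^+ i \in S) = (y \in S).
Proof.
move=> /forall_inP stS yY.
have mulX z j : z \in Y -> z \in S -> z * h ^+ j \in S.
  move=> zY zS; elim: j => [|j IHj]; first by rewrite mulg1.
  rewrite expgSr mulgA; apply: stS; rewrite inE IHj andbT.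
  by have /setDP [] := outside_mulX j zY.
apply/idP/idP => [yhS|]; last exact: mulX.
have := mulX _ (#[h] * i - i)%N (outside_mulX i yY) yhS.
rewrite -mulgA -expgD subnKC; last by rewrite leq_pmull // order_gt0.
by rewrite expgM expg_order expg1n mulg1.
Qed.

Lemma mem_pair_class y : y \in pair_class y.
Proof. by rewrite inE lcoset_refl. Qed.

Lemma pick_rep_pair_class y : pick_rep (pair_class y) \in pair_class y.
Proof.
rewrite /pick_rep; case: pickP => [x //|none].
by have := none y; rewrite mem_pair_class.
Qed.

Lemma pair_classP y z : z \in pair_class y ->
  exists i, z = y * h ^+ i \/ z = y^-1 * h ^+ i.
Proof.
rewrite inE !mem_lcoset => /orP [] /cycleP [i Ei]; exists i.
  by left; rewrite -Ei mulKVg.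
by right; rewrite invgK in Ei; rewrite -Ei mulKg.
Qed.

Lemma pair_class_outside y z : y \in Y -> z \in pair_class y -> z \in Y.
Proof.
by move=> yY /pair_classP [i [] ->]; apply: outside_mulX; rewrite ?outsideV.
Qed.

Lemma stable_outside_pair_class S y z :
  sym_subset A S -> stable_outside K h S -> y \in Y -> z \in pair_class y ->
  (z \in S) = (y \in S).
Proof.
move=> symS stS yY /pair_classP [i [] ->]; first exact: stable_outside_mulX.
by rewrite stable_outside_mulX ?(sym_subsetV symS) //; apply: outsideV.
Qed.

Lemma determining_pairs_inj :
  {in [pred S | sym_subset A S && stable_outside K h S] &,
    injective (fun S : {set gT} =>
      [set o in inv_pairs A | o \subset S] :&: determining_pairs)}.
Proof.
move=> S S' /andP [symS stS] /andP [symS' stS'] eqX.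
have same x : x \in A :\ 1 -> inv_pair x \in determining_pairs ->
    (x \in S) = (x \in S').
  move=> xA xD; have xU : inv_pair x \in inv_pairs A by apply: imset_f.
  have /setP /(_ (inv_pair x)) := eqX.
  by rewrite !in_setI xD !andbT !inE xU (sym_subset_pair symS) (sym_subset_pair symS').
apply/setP => x.
have [xA|xA] := boolP (x \in A :\ 1); last first.
  apply/idP/idP => [/(sym_subset_mem symS)|/(sym_subset_mem symS')];
  by rewrite (negPf xA).
have [xK|xK] := boolP (x \in K).
  apply: same => //; apply/setUP; left; apply: imset_f.
  by move: xA; rewrite !inE xK => /andP [-> _].
have xY : x \in Y by move: xA; rewrite !inE xK => /andP [_ ->].
have tx := pick_rep_pair_class x.
rewrite -(stable_outside_pair_class symS stS xY tx).
rewrite -(stable_outside_pair_class symS' stS' xY tx).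
apply: same; last by apply/setUP; right; apply: imset_f.
have /setDP [tA tK] := pair_class_outside xY tx.
by rewrite !inE tA andbT; apply: contraNneq tK => ->.
Qed.

Lemma pair_class_eq y z :
  y \in A -> z \in pair_class y -> pair_class z = pair_class y.
Proof.
move=> yA /pair_classP [i zE].
have hiA : (h ^+ i)^-1 \in A by rewrite groupV groupX.
have hiH : (h ^+ i)^-1 \in H by rewrite groupV mem_cycle.
have hH : h ^+ i \in H := mem_cycle h i.
rewrite /pair_class; case: zE => ->; rewrite invMg ?invgK.
- by rewrite (centsP abA _ hiA _ (groupVr yA)) !lcosetM (lcoset_id hH) (lcoset_id hiH).
- by rewrite (centsP abA _ hiA _ yA) !lcosetM (lcoset_id hH) (lcoset_id hiH) setUC.
Qed.

Lemma card_inv_pairs_split :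
  #|inv_pairs A| = #|inv_pair @: (K :\ 1)| + #|inv_pair @: Y|.
Proof.
rewrite inv_pairsE; have -> : A :\ 1 = (K :\ 1) :|: Y.
  apply/setP => x; rewrite !inE; have [xK|xK] /= := boolP (x \in K).
    by rewrite (subsetP KsubA) ?orbF.
  by rewrite andbF; case: eqP => // x1; rewrite x1 group1 in xK.
rewrite imsetU cardsU; suff -> : inv_pair @: (K :\ 1) :&: inv_pair @: Y = set0.
  by rewrite cards0 subn0.
apply/setP => o; rewrite !inE; apply/negP => /andP [].
move=> /imsetP [x /setD1P [_ xK] ->] /imsetP [y /setDP [_ yK] /setP /(_ y)].
rewrite !inE eqxx /= => /orP [] /eqP yx; by rewrite yx ?groupV xK in yK.
Qed.

Lemma card_inv_pairs_outside_le :
  (#|inv_pair @: Y| <= #|inv_pairs A :\: determining_pairs| + #|pair_class @: Y|)%N.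
Proof.
have D_le : #|determining_pairs| <= #|inv_pair @: (K :\ 1)| + #|pair_class @: Y|.
  apply: leq_trans (leq_card_setU _ _) _; rewrite leq_add2l.
  by rewrite (imset_comp (fun B => inv_pair (pick_rep B))) leq_imset_card.
have := cardsID determining_pairs (inv_pairs A).
have := subset_leq_card (subsetIr (inv_pairs A) determining_pairs).
by have := card_inv_pairs_split; lia.
Qed.

(* Summed over y outside K, this counts the inverse pairs outside K minus the
   pair classes outside K (card_classes_sum_inv). *)
Definition pair_deficit (y : gT) : R :=
  (/ INR #|inv_pair y| - / INR #|pair_class y|)%R.

Lemma sum_pair_deficit_le :
  (\big[Rplus/0%R]_(y in Y) pair_deficit y
     <= INR #|inv_pairs A :\: determining_pairs|)%R.
Proof.
have card_pairs :
    (INR #|inv_pair @: Y| = \big[Rplus/0]_(y in Y) / INR #|inv_pair y|)%R.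
  apply: card_classes_sum_inv => [y _|y z yY /set2P [] ->]; first by rewrite !inE eqxx.
    by [].
  by rewrite outsideV // /inv_pair invgK setUC.
have card_classes :
    (INR #|pair_class @: Y| = \big[Rplus/0]_(y in Y) / INR #|pair_class y|)%R.
  apply: card_classes_sum_inv => [y _|y z /setDP [yA yK] zy].
    exact: mem_pair_class.
  by split; [apply: pair_class_outside zy; apply/setDP | exact: pair_class_eq zy].
have sum_split : (\big[Rplus/0]_(y in Y) pair_deficit y + INR #|pair_class @: Y|
    = INR #|inv_pair @: Y|)%R.
  rewrite card_pairs card_classes -big_split.
  by apply: eq_bigr => y _; rewrite /pair_deficit /=; lra.
have := card_inv_pairs_outside_le; move/leP/le_INR; rewrite plus_INR; lra.
Qed.

Lemma card_pair_class_ge y : (#[h] <= #|pair_class y|)%N.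
Proof. by rewrite orderE -(card_lcoset H y) subset_leq_card // subsetUl. Qed.

Lemma card_pair_class_disjoint y :
  y \in A -> y ^+ 2 \notin H -> #|pair_class y| = (2 * #[h])%N.
Proof.
move=> yA y2H; rewrite cardsU !card_lcoset addnn -mul2n.
suff -> : y *: H :&: y^-1 *: H = set0 by rewrite cards0 subn0.
apply/setP => z; rewrite !inE !mem_lcoset invgK; apply/negP => /andP [yzH yzH'].
have zA : z \in A.
  by rewrite -(groupMl _ (groupVr yA)) (subsetP _ _ yzH) // cycle_subG.
have : (y^-1 * z)^-1 * (y * z) \in H by rewrite groupM ?groupV.
rewrite invMg invgK mulgA -(mulgA z^-1) -expg2.
by rewrite (centsP abA _ (groupVr zA) _ (groupX 2 yA)) mulgKV (negPf y2H).
Qed.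

Lemma inv_pair_sub_class y : inv_pair y \subset pair_class y.
Proof.
by apply/subsetP => z /set2P [] ->; rewrite inE lcoset_refl ?orbT.
Qed.

Lemma pair_deficit_ge0 y : (0 <= pair_deficit y)%R.
Proof.
have /andP [pair_gt0 _] := card_inv_pair y.
have := Rinv_INR_le pair_gt0 (subset_leq_card (inv_pair_sub_class y)).
by rewrite /pair_deficit; lra.
Qed.

Lemma pair_deficit_ge_sixth y : (3 <= #[h])%N -> (/ 6 <= pair_deficit y)%R.
Proof.
move=> h_ge3; have /andP [pair_gt0 pair_le2] := card_inv_pair y.
have := Rinv_INR_le pair_gt0 pair_le2.
have := Rinv_INR_le (isT : (0 < 3)%N) (leq_trans h_ge3 (card_pair_class_ge y)).
by rewrite /pair_deficit /=; lra.
Qed.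

Lemma pair_deficit_ge_quarter y :
  y \in A -> #[h] = 2%N -> y ^+ 2 != h -> (/ 4 <= pair_deficit y)%R.
Proof.
move=> yA h2 y2h; have /andP [pair_gt0 pair_le2] := card_inv_pair y.
have := Rinv_INR_le pair_gt0 pair_le2; rewrite /pair_deficit /= => inv_pair_ge.
have [y2H|y2H] := boolP (y ^+ 2 \in H); last first.
  by rewrite card_pair_class_disjoint // h2 /=; lra.
have y2 : y ^+ 2 = 1.
  have [i] := cyclePmin y2H; rewrite h2; case: i => [|[|//]] _ y2i.
    by rewrite y2i expg0.
  by rewrite y2i expg1 eqxx in y2h.
have yV : y^-1 = y by apply/eqP; rewrite eq_invg_mul -expg2 y2.
have -> : #|inv_pair y| = 1%N by rewrite /inv_pair yV setUid cards1.
have := card_pair_class_ge y; rewrite h2 => /(Rinv_INR_le (isT : (0 < 2)%N)).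
by rewrite /=; lra.
Qed.

Hypotheses (notA2 : ~~ pgroup 2 A) (h1 : h != 1).

Lemma card_undetermined_pairs_ge :
  (INR #|A| <= 12 * INR #|inv_pairs A :\: determining_pairs|)%R.
Proof.
have A_le_Y : (#|A| <= 2 * #|Y|)%N.
  have := proper_card_double KA; rewrite cardsD (setIidPr KsubA).
  by have := subset_leq_card KsubA; lia.
apply: (Rle_trans _ (12 * \big[Rplus/0]_(y in Y) pair_deficit y)%R); last first.
  by apply: Rmult_le_compat_l; [lra | exact: sum_pair_deficit_le].
have h_gt1 : 1 < #[h] by rewrite order_gt1.
have [h_ge3|h_le2] := leqP 3 #[h].
  apply: Rle_trans (_ : 12 * (INR #|Y| * / 6) <= _)%R.
    by have := le_INR _ _ (leP A_le_Y); rewrite mult_INR /=; lra.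
  rewrite -sumR_const; apply: Rmult_le_compat_l; first lra.
  by apply: sumR_le => y _; apply: pair_deficit_ge_sixth.
have h2 : #[h] = 2 by lia.
set Z := [set y in A | y ^+ 2 == h].
have Z_small : 6 * #|Z| <= #|A|.
  by apply: card_sqrt_involution_le; rewrite // -h2 expg_order.
have A_le_YZ : (#|A| <= 3 * #|Y :\: Z|)%N.
  by have := cardsID Z Y; have := subset_leq_card (subsetIr Y Z); lia.
apply: Rle_trans (_ : 12 * (INR #|Y :\: Z| * / 4) <= _)%R.
  by have := le_INR _ _ (leP A_le_YZ); rewrite mult_INR /=; lra.
rewrite -sumR_const; apply: Rmult_le_compat_l; first lra.
apply: Rle_trans (_ : \big[Rplus/0]_(y in Y :\: Z) pair_deficit y <= _)%R.
  apply: sumR_le => y /setDP [/setDP [yA _]]; rewrite inE yA /=.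
  exact: pair_deficit_ge_quarter.
apply: sumR_le_sub => [y /setDP []//|y _]; exact: pair_deficit_ge0.
Qed.

End StableOutside.



Lemma prob_stable_outside_le (gT : finGroupType) (A K : {group gT}) (h : gT) (p : R) :
  abelian A -> ~~ pgroup 2 A -> K \proper A -> h \in K -> h != 1 ->
  (0 <= p)%R -> (p <= 1 / 2)%R ->
  (prob A p (stable_outside K h) <= exp (- (p * INR #|A|) / 12))%R.
Proof.
move=> abA notA2 KA hK h1 p_ge0 p_le_half.
apply: Rle_trans (prob_le_injective p_ge0 p_le_half (determining_pairs_inj KA hK)) _.
apply: Rle_trans (pow_one_minus_le_exp _ _) _; first lra.
apply: exp_le_compat.
have := card_undetermined_pairs_ge abA KA hK notA2 h1.
set k := INR _ => A_le_k.
have := Rmult_le_compat_l p _ _ p_ge0 A_le_k; lra.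
Qed.

Definition witness_event (gT : finGroupType) (A : {set gT}) (m : nat)
    (w : gT * {ffun 'I_m -> gT}) (S : {set gT}) : bool :=
  let K := <<[set:: codom w.2]>> in
  [&& w.1 != 1, K \proper A, w.1 \in K & stable_outside K w.1 S].

Definition witnesses (gT : finGroupType) (A : {set gT}) (m : nat) :
    {set gT * {ffun 'I_m -> gT}} :=
  setX A [set f : {ffun 'I_m -> gT} | f \in ffun_on A].

Lemma card_witnesses (gT : finGroupType) (A : {set gT}) (m : nat) :
  #|witnesses A m| = (#|A| ^ m.+1)%N.
Proof. by rewrite cardsX cardsE card_ffun_on card_ord expnS. Qed.

Lemma bad_event_witness (gT : finGroupType) (A : {group gT}) (S : {set gT}) :
  bad_event A S ->
  exists2 w, w \in witnesses A (trunc_log 2 #|A|).-1 & witness_event A w S.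
Proof.
set m := (trunc_log 2 #|A|).-1.
case/existsP => H /existsP [K] /and4P [H1 HK KA /forall_inP cosetsH].
have [h hH h1] := trivgPn _ H1.
have [s [genK card_s]] := small_generating_seq K.
have size_s : size s <= m.
  have K_le := proper_card_double KA.
  have : 2 ^ (size s).+1 <= #|A| by rewrite expnS; lia.
  by move/trunc_log_max => /(_ isT); rewrite /m; lia.
pose f := [ffun j : 'I_m => nth 1 s j].
have genf : <<[set:: codom f]>> = K.
  apply/eqP; rewrite eqEsubset gen_subG; apply/andP; split.
    apply/subsetP => y; rewrite inE => /codomP [j ->]; rewrite ffunE.
    have [js|js] := ltnP j (size s); last by rewrite nth_default.
    by rewrite -genK mem_gen // inE mem_nth.
  rewrite -genK genS //; apply/subsetP => y; rewrite !inE => ys.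
  apply/codomP; exists (Ordinal (leq_trans (etrans (index_mem y s) ys) size_s)).
  by rewrite ffunE /= nth_index.
have KsubA := proper_sub KA.
exists (h, f).
  rewrite !inE (subsetP KsubA) ?(subsetP HK) //=.
  by apply/ffun_onP => j; apply: (subsetP KsubA); rewrite -genf mem_gen // inE codom_f.
rewrite /witness_event /= genf h1 KA (subsetP HK) //=.
apply/forall_inP => x xSK; have /subsetP := cosetsH x xSK.
by move=> /(_ (x * h)); rewrite mem_lcoset mulKg hH => /(_ isT) /setDP [].
Qed.

Lemma pow_log2_mul_exp_le (n T : nat) (p : R) :
  (2 <= n)%N -> (2 ^ T <= n)%N -> (25 * log2 (INR n) ^ 2 / INR n <= p)%R ->
  (INR (n ^ T) * exp (- (p * INR n) / 12) <= exp (- log2 (INR n) ^ 2))%R.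
Proof.
move=> n_ge2 Tn p_ge.
have n_gt0 : (0 < INR n)%R by apply: lt_0_INR; apply/ltP; lia.
have ln2_gt0 : (0 < ln 2)%R by have := ln_lt_2; lra.
have ln2_lt1 : (ln 2 < 1)%R.
  rewrite -[1%R]ln_exp; apply: ln_increasing; first lra.
  by have := exp_ineq1 1 R1_neq_R0; lra.
set L := log2 (INR n).
have lnE : ln (INR n) = (L * ln 2)%R by rewrite /L /log2; field; lra.
have L_ge0 : (0 <= L)%R.
  apply: Rmult_le_pos; last by apply: Rlt_le; apply: Rinv_0_lt_compat.
  by rewrite -ln_1; apply: ln_le_compat; [lra | apply: (le_INR 1); apply/leP; lia].
have T_le : (INR T <= L)%R.
  apply: (Rmult_le_reg_r (ln 2)) => //; rewrite -lnE -ln_pow; last lra.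
  apply: ln_le_compat; first by apply: pow_lt; lra.
  have -> : 2%R = INR 2 by rewrite /=; ring.
  by rewrite -INR_expn; apply: le_INR; apply/leP.
have pn_ge : (25 * L ^ 2 <= p * INR n)%R.
  have := Rmult_le_compat_r (INR n) _ _ (Rlt_le _ _ n_gt0) p_ge.
  by rewrite /Rdiv Rmult_assoc Rinv_l ?Rmult_1_r //; lra.
rewrite INR_expn -(exp_ln (INR n ^ T)); last exact: pow_lt.
rewrite ln_pow // -exp_plus; apply: exp_le_compat.
have : (INR T * ln (INR n) <= L ^ 2)%R.
  rewrite lnE; apply: Rle_trans (_ : L * (L * ln 2) <= _)%R.
    by apply: Rmult_le_compat_r => //; apply: Rmult_le_pos; lra.
  by have := Rmult_le_compat_l (L ^ 2) _ _ (pow2_ge_0 L) (Rlt_le _ _ ln2_lt1); lra.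
by have := pow2_ge_0 L; lra.
Qed.

Lemma prob_witness_event_le (gT : finGroupType) (A : {group gT}) (p : R) (m : nat)
    (w : gT * {ffun 'I_m -> gT}) :
  abelian A -> ~~ pgroup 2 A -> (0 <= p)%R -> (p <= 1 / 2)%R ->
  (prob A p (witness_event A w) <= exp (- (p * INR #|A|) / 12))%R.
Proof.
move=> abA notA2 p_ge0 p_le_half; set K := <<[set:: codom w.2]>>%G.
have [/and3P [w1 KA wK]|not_witness] := boolP [&& w.1 != 1, K \proper A & w.1 \in K].
  apply: Rle_trans (prob_stable_outside_le abA notA2 KA wK w1 p_ge0 p_le_half).
  by apply: prob_le_sub => // S _ /and4P [].
apply: Rle_trans (_ : prob A p xpred0 <= _)%R; last first.
  by rewrite prob_pred0; apply/Rlt_le/exp_pos.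
apply: prob_le_sub => // S _ /and4P [w1 KA wK _].
by rewrite w1 KA wK in not_witness.
Qed.

Theorem mainTheorem2 :
  exists (C : R) (N : nat), (0 < C)%R /\
  forall (gT : finGroupType) (A : {group gT}) (p : R),
    abelian A ->
    ~~ pgroup 2 A ->
    (N <= #|A|)%N ->
    (25 * (log2 (INR #|A|)) ^ 2 / INR #|A| <= p)%R ->
    (p <= 1 / 2)%R ->
    (prob A p (bad_event A) <= C * exp (- (log2 (INR #|A|)) ^ 2))%R.
Proof.
exists 1%R, 0; split=> [|gT A p abA notA2 _ p_ge p_le_half]; first lra.
have A_ge2 : 2 <= #|A|.
  by move: notA2 (cardG_gt0 A); rewrite /pgroup; case: #|A| => [|[|]] //.
have p_ge0 : (0 <= p)%R.
  apply: Rle_trans p_ge; apply: Rmult_le_pos; last first.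
    by apply/Rlt_le/Rinv_0_lt_compat/lt_0_INR/ltP; lia.
  by apply: Rmult_le_pos; [lra | exact: pow2_ge_0].
have T_gt0 : 0 < trunc_log 2 #|A| by apply: trunc_log_max.
apply: Rle_trans (prob_union_bound p_ge0 p_le_half
                    (fun S _ => @bad_event_witness _ A S)) _.
apply: Rle_trans (sumR_le (fun w _ =>
                    prob_witness_event_le w abA notA2 p_ge0 p_le_half)) _.
rewrite sumR_const card_witnesses prednK // Rmult_1_l.
by apply: pow_log2_mul_exp_le => //; apply: trunc_logP; lia.
Qed.
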